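(* Let $r\ge 2$, let $\lambda,\mu\in\Lambda$ with $\lambda\sim_e\mu$, and let $s\in\mathbb{Z}$. Then $\eta(\lambda,s)\xrightarrow{r}_2\eta(\mu,s)$ (as elements of $\mathcal{A}_r^e$) if and only if $\Phi_r(\lambda,s)\xrightarrow{e}_2\Phi_r(\mu,s)$ (as elements of $\mathcal{A}_e^r$).
   Context: Fix an integer $e\ge 2$. A partition is a weakly decreasing sequence $\lambda=(\lambda_1,\lambda_2,\dots)$ of non-negative integers with finite sum $|\lambda|$; $\Lambda$ denotes the set of partitions and $\Lambda^{(m)}$ the set of $m$-multipartitions, i.e. $m$-tuples $\boldsymbol\lambda=(\lambda^{(1)},\dots,\lambda^{(m)})$ of partitions, with $|\boldsymbol\lambda|=\sum_k|\lambda^{(k)}|$. A $\beta$-set is a subset $B\subseteq\mathbb{Z}$ containing all sufficiently small integers and no sufficiently large ones. For $\lambda\in\Lambda$ and $s\in\mathbb{Z}$ set $B_s(\lambda)=\{\lambda_i-i+s : i\ge 1\}$; every $\beta$-set equals $B_s(\lambda)$ for a unique pair $(\lambda,s)$. For $N\ge 2$ let $\mathcal{A}_N=\Lambda\times\mathbb{Z}$ (abacus configurations with $N$ runners) and $\mathcal{A}_N^m=\Lambda^{(m)}\times\mathbb{Z}^m$, where $(\boldsymbol\lambda,\mathbf{s})$ is identified with the $m$-tuple of $\beta$-sets $(B_{s_1}(\lambda^{(1)}),\dots,B_{s_m}(\lambda^{(m)}))$. The map $\eta$: for $(\lambda,s)\in\mathcal{A}_e$ with $B=B_s(\lambda)$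 and $0\le i<e$, the set $C_i=\{(b-i)/e : b\in B,\ b\equiv i \bmod e\}$ is a $\beta$-set, so $C_i=B_{t_i}(\rho_i)$ for a unique $(\rho_i,t_i)\in\Lambda\times\mathbb{Z}$; set $\eta(\lambda,s)=((\rho_0,\dots,\rho_{e-1}),(t_0,\dots,t_{e-1}))\in\Lambda^{(e)}\times\mathbb{Z}^e$, which we also regard as an element of $\mathcal{A}_r^e$. The $e$-weight of $\lambda$ is $\mathrm{wt}(\lambda)=\sum_i|\rho_i|$. For $\lambda,\mu\in\Lambda$ write $\lambda\sim_e\mu$ if $|\lambda|=|\mu|$, $\mathrm{wt}(\lambda)=\mathrm{wt}(\mu)$ and $\lambda,\mu$ have the same $e$-core (equivalently, $(\lambda,s)$ and $(\mu,s)$ have the same $t$-component under $\eta$ and the same weight, for any $s$). Moves on $\mathcal{A}_N^m$, for $(\boldsymbol\lambda,\mathbf{s}),(\boldsymbol\mu,\mathbf{s})$ with the same $\mathbf{s}$: (1) $(\boldsymbol\lambda,\mathbf{s})\xrightarrow{N}_1(\boldsymbol\mu,\mathbf{s})$ if for some $k_1,k_2\in\{1,\dots,m\}$ the tuple of $\beta$-sets of $(\boldsymbol\mu,\mathbf{s})$ is obtained from that of $(\boldsymbol\lambda,\mathbf{s})$ by replacing an element $b$ of the $k_1$-th $\beta$-set by $b-N$ (not previously in that set) and then replacing an element $c$ of the $k_2$-th $\beta$-set by $c+N$ (not previously in that set). (2) $(\boldsymbol\lambda,\mathbf{s})\xrightarrow{N}_2(\boldsymbol\mu,\mathbf{s})$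 if there exist $k_1,k_2\in\{1,\dots,m\}$, $b_1,b_2\in\mathbb{Z}$ with $b_1\equiv b_2\bmod N$, and $h>0$, such that $b_1\in B_{s_{k_1}}(\lambda^{(k_1)})$, $b_1+h\notin B_{s_{k_1}}(\lambda^{(k_1)})$, $b_2\notin B_{s_{k_2}}(\lambda^{(k_2)})$, $b_2+h\in B_{s_{k_2}}(\lambda^{(k_2)})$, and the $\beta$-sets of $(\boldsymbol\mu,\mathbf{s})$ agree with those of $(\boldsymbol\lambda,\mathbf{s})$ except that $b_1$ is replaced by $b_1+h$ in component $k_1$ and $b_2+h$ is replaced by $b_2$ in component $k_2$. Uglov's map: for $1\le k\le r$ define $\psi_k:\mathbb{Z}\to\mathbb{Z}$ by $\psi_k(ae+i)=((a+1)r-k)e+i$ for $a\in\mathbb{Z}$, $0\le i<e$. For $(\boldsymbol\lambda,\mathbf{s})\in\mathcal{A}_e^r$ the set $B=\bigsqcup_{k=1}^r\psi_k(B_{s_k}(\lambda^{(k)}))$ is a $\beta$-set, and $\Psi_r(\boldsymbol\lambda,\mathbf{s})$ is the unique $(\tilde\lambda,\tilde s)\in\mathcal{A}_e$ with $B_{\tilde s}(\tilde\lambda)=B$. $\Psi_r:\mathcal{A}_e^r\to\mathcal{A}_e$ is a bijection; $\Phi_r=\Psi_r^{-1}$. *)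

From Stdlib Require Import ClassicalEpsilon.
From mathcomp Require Import all_boot all_algebra.
Set Implicit Arguments. Unset Strict Implicit. Unset Printing Implicit Defensive.
Import GRing.Theory Num.Theory.
Local Open Scope ring_scope.

(* A partition: a finite weakly decreasing sequence of positive integers
   (lambda_i = nth 0 l (i-1), implicitly padded by zeros). *)
Definition is_partition (l : seq nat) : bool :=
  sorted geq l && all (fun x => (0 < x)%N) l.

Definition psize (l : seq nat) : nat := sumn l.

Definition beta (s : int) (l : seq nat) (b : int) : Prop :=
  exists i : nat, b = (nth 0%N l i)%:Z - (i.+1)%:Z + s.

(* An element of A_N^m : (multipartition, charge vector), components indexed by 'I_m
   (component k+1 of the paper is index k). *)
Definition mconf (m : nat) : Type := (('I_m -> seq nat) * ('I_m -> int))%type.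

Definition mbeta (m : nat) (x : mconf m) (k : 'I_m) (b : int) : Prop :=
  beta (x.2 k) (x.1 k) b.

(* The unique (lambda, s) with B_s(lambda) = B (B assumed to be a beta-set). *)
Definition conf_of_beta (B : int -> Prop) : seq nat * int :=
  epsilon (inhabits ([::], 0%:Z))
    (fun p => is_partition p.1 /\ forall b, beta p.2 p.1 b <-> B b).

(* eta(lambda, s) in Lambda^(e) x Z^e : component i is (rho_i, t_i) with
   B_{t_i}(rho_i) = C_i = { (b - i)/e : b in B_s(lambda), b = i mod e }. *)
Definition eta (e : nat) (l : seq nat) (s : int) : mconf e :=
  (fun i : 'I_e => (conf_of_beta (fun c => beta s l (c * e%:Z + (i : nat)%:Z))).1,
   fun i : 'I_e => (conf_of_beta (fun c => beta s l (c * e%:Z + (i : nat)%:Z))).2).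

Definition wt (e : nat) (l : seq nat) : nat :=
  (\sum_(i < e) psize ((eta e l 0).1 i))%N.

(* lambda ~_e mu : same size, same weight, same e-core; the latter expressed
   (as in the paper) by equality of the t-components of eta. *)
Definition sim_e (e : nat) (l m : seq nat) : Prop :=
  psize l = psize m /\ wt e l = wt e m /\
  (forall i : 'I_e, (eta e l 0).2 i = (eta e m 0).2 i).

(* Uglov's psi_k, for the index k : 'I_r standing for k+1 in {1..r}:
   psi_k(a e + i) = ((a+1) r - k) e + i. *)
Definition psi (e r : nat) (k : 'I_r) (c : int) : int :=
  ((((c %/ e%:Z)%Z + 1) * r%:Z - (k.+1 : nat)%:Z) * e%:Z + (c %% e%:Z)%Z).

Definition Psi (e r : nat) (x : mconf r) : seq nat * int :=
  conf_of_beta (fun b => exists (k : 'I_r) (c : int), mbeta x k c /\ b = psi e k c).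

(* Phi_r = Psi_r^{-1} : the (unique) element of A_e^r mapped by Psi_r to (lambda, s). *)
Definition Phi (e r : nat) (l : seq nat) (s : int) : mconf r :=
  epsilon (inhabits ((fun _ => [::]), (fun _ => 0%:Z)) : inhabited (mconf r))
    (fun x => (forall k, is_partition (x.1 k)) /\
       forall b, beta s l b <->
         exists (k : 'I_r) (c : int), mbeta x k c /\ b = psi e k c).

Definition move2 (N m : nat) (x y : mconf m) : Prop :=
  (forall k, x.2 k = y.2 k) /\
  exists (k1 k2 : 'I_m) (b1 b2 : int) (h : int),
    (b1 = b2 %[mod N%:Z])%Z /\ 0 < h /\
    mbeta x k1 b1 /\ ~ mbeta x k1 (b1 + h) /\
    ~ mbeta x k2 b2 /\ mbeta x k2 (b2 + h) /\
    forall (k : 'I_m) (b : int),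
      mbeta y k b <->
      (let step1 := fun b' =>
          if k == k1 then (b' <> b1 /\ mbeta x k b') \/ b' = b1 + h
          else mbeta x k b' in
       if k == k2 then (b <> b2 + h /\ step1 b) \/ b = b2 else step1 b).

(* Both [eta] and [Phi_r] read off the single beta-set [B = B_s(lambda)] on an abacus.
   Writing an integer as [((a r + j) e + i)] with [0 <= i < e] and [0 <= j < r], [eta]
   places it on runner [i] of an [e]-abacus at level [a r + j], and [Phi_r] on runner
   [r - 1 - j] of an [r]-abacus at level [a e + i].  In either picture a move of type 2
   exchanges two beads of [B] for two gaps, the four positions forming a rectangle in the
   [(i, j, a)] coordinates; the requirement that the charges be unchanged is exactly what
   rules out the degenerate rectangles, in which one runner gains or loses a bead.
   Transposing the rectangle turns a move on one abacus into a move on the other. *)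

From Stdlib Require Import ClassicalEpsilon.
From mathcomp Require Import all_boot all_order all_algebra zify.
Import Order.TTheory GRing.Theory Num.Theory.
Set Implicit Arguments. Unset Strict Implicit. Unset Printing Implicit Defensive.
Local Open Scope ring_scope.

Definition memb (P : int -> Prop) (b : int) : bool :=
  if excluded_middle_informative (P b) then true else false.

Lemma membP P b : reflect (P b) (memb P b).
Proof. by rewrite /memb; case: excluded_middle_informative => H; constructor. Qed.

Definition window (L : int) (n : nat) : seq int := [seq L + j%:Z | j <- iota 0 n].

Lemma window_cat L m n : window L (m + n) = window L m ++ window (L + m%:Z) n.
Proof.
rewrite /window iotaD map_cat add0n -[m in iota m n]addn0 iotaDl -map_comp.
by congr (_ ++ _); apply: eq_map => j /=; lia.
Qed.

Lemma mem_window L n b : (b \in window L n) = (L <= b < L + n%:Z).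
Proof.
apply/mapP/idP => [[j]|/andP [Lb bU]]; first by rewrite mem_iota => /andP [_ ?] ->; lia.
by exists `|b - L|%N; [rewrite mem_iota; lia | lia].
Qed.

Lemma uniq_window L n : uniq (window L n).
Proof. by rewrite map_inj_uniq ?iota_uniq // => i j; lia. Qed.

Lemma size_window L n : size (window L n) = n.
Proof. by rewrite size_map size_iota. Qed.

Definition framed (P : int -> Prop) (L : int) (n : nat) :=
  (forall b, b < L -> P b) /\ (forall b, L + n%:Z <= b -> ~ P b).

Definition charge_in (P : int -> Prop) (L : int) (n : nat) : int :=
  L + (count (memb P) (window L n))%:Z.

(* [t] is the charge [s] of the beta-set [P = B_s(lambda)], computed on any frame. *)
Definition has_charge (P : int -> Prop) (t : int) :=
  exists L n, framed P L n /\ t = charge_in P L n.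

Lemma framed_widen P L n L' n' : framed P L n -> L' <= L -> L + n%:Z <= L' + n'%:Z ->
  framed P L' n' /\ charge_in P L' n' = charge_in P L n.
Proof.
move=> [below above] L'L nU; split; first by split=> b bU; [apply: below | apply: above]; lia.
have -> : n' = (`|(L - L')%R| + n + `|(L' + n'%:Z - L - n%:Z)%R|)%N by lia.
rewrite /charge_in !window_cat !count_cat.
have -> : L' + `|L - L'|%N%:Z = L by lia.
rewrite [X in (X + _ + _)%N](@eq_in_count _ _ predT); last first.
  by move=> b; rewrite mem_window => /andP [_ bL]; apply/membP/below; lia.
rewrite [X in (_ + X)%N](@eq_in_count _ _ pred0); last first.
  by move=> b; rewrite mem_window => /andP [nb _]; apply/membP/above; lia.
by rewrite count_predT count_pred0 size_window; lia.
Qed.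

Lemma has_charge_uniq P t t' : has_charge P t -> has_charge P t' -> t = t'.
Proof.
move=> [L1 [n1 [F1 ->]]] [L2 [n2 [F2 ->]]].
pose L := L1 - `|(L1 - L2)%R|%N%:Z; pose n := (`|(L1 - L)%R| + n1 + `|(L2 - L)%R| + n2)%N.
have [_ <-] := @framed_widen _ _ _ L n F1 ltac:(rewrite /L; lia) ltac:(rewrite /n; lia).
by have [_ <-] := @framed_widen _ _ _ L n F2 ltac:(rewrite /L; lia) ltac:(rewrite /n; lia).
Qed.

Lemma has_charge_ext P Q t : (forall b, P b <-> Q b) -> has_charge P t -> has_charge Q t.
Proof.
move=> PQ [L [n [[below above] ->]]]; exists L, n; split.
  by split=> b bL; [apply/PQ/below | move/PQ; apply: above].
by congr (_ + _%:Z); apply: eq_count => b; apply/membP/membP => /PQ.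
Qed.

Lemma count_memb_add (s : seq int) P Q a : uniq s -> a \in s -> ~ P a ->
  (forall b, Q b <-> P b \/ b = a) -> count (memb Q) s = (count (memb P) s).+1.
Proof.
move=> us sa Pa QP.
rewrite (eq_count (a2 := predU (memb P) (pred1 a))); last first.
  by move=> b /=; apply/membP/orP => [/QP [/membP|/eqP]|[/membP|/eqP]]; rewrite ?QP; auto.
have := count_predUI (memb P) (pred1 a) s.
rewrite (@eq_count _ (predI _ _) pred0) ?count_pred0; last first.
  by move=> b /=; apply/andP => -[/membP Pb /eqP ba]; rewrite ba in Pb.
by rewrite addn0 count_uniq_mem // sa addn1.
Qed.

Lemma has_charge_ins P Q t a : has_charge P t -> ~ P a ->
  (forall b, Q b <-> P b \/ b = a) -> has_charge Q (t + 1).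
Proof.
move=> [L [n [F ->]]] Pa QP.
pose L' := L - `|(a - L)%R|%N%:Z; pose n' := (`|(L - L')%R| + n + `|(a - L)%R|.+1)%N.
have [[below above] <-] :=
  @framed_widen _ _ _ L' n' F ltac:(rewrite /L'; lia) ltac:(rewrite /n'; lia).
exists L', n'; split.
  split=> b bL; first by apply/QP; left; apply: below.
  by move/QP=> [|ba]; [apply: above | move: bL; rewrite ba /n' /L'; lia].
rewrite /charge_in (count_memb_add (uniq_window _ _) _ Pa QP); first lia.
by rewrite mem_window /n' /L'; lia.
Qed.

Lemma has_charge_del P Q t a : has_charge P t -> P a ->
  (forall b, Q b <-> P b /\ b <> a) -> has_charge Q (t - 1).
Proof.
move=> [L [n [[below above] ->]]] Pa QP.
have aL : a < L + n%:Z by rewrite ltNge; apply/negP => /above.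
pose L' := L - `|(a - L)%R|%N%:Z; pose n' := (`|(L - L')%R| + n)%N.
have [[below' above'] <-] := @framed_widen _ _ _ L' n' (conj below above)
  ltac:(rewrite /L'; lia) ltac:(rewrite /n'; lia).
have FQ : framed Q L' n'.
  split=> b bL; last by move/QP => [/above'].
  by apply/QP; split; [apply: below' | move=> ba; move: bL; rewrite ba /L'; lia].
have HP : has_charge P (charge_in Q L' n' + 1).
  apply: (@has_charge_ins Q P _ a); [by exists L', n' | by move/QP => [] |].
  move=> b; split=> [Pb|[/QP []|->] //].
  by case: (eqVneq b a) => [|/eqP]; [right | left; apply/QP].
have -> : charge_in P L' n' = charge_in Q L' n' + 1.
  by apply: has_charge_uniq HP; exists L', n'.
by rewrite addrK; exists L', n'.
Qed.

Lemma beta_nil t b : beta t [::] b <-> b < t.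
Proof.
split=> [[i ->]|bt]; first by rewrite nth_nil; lia.
by exists `|(t - b)%R|.-1; rewrite nth_nil; lia.
Qed.

Lemma beta_cons t x p b : beta t (x :: p) b <-> b = x%:Z - 1 + t \/ beta (t - 1) p b.
Proof.
split=> [[[|i] ->] /=|[->|[i ->]]]; [by left; lia | by right; exists i; lia | |].
  by exists 0%N => /=; lia.
by exists i.+1 => /=; lia.
Qed.

Lemma beta_le_head t p b : sorted geq p -> beta t p b -> b <= (head 0%N p)%:Z - 1 + t.
Proof.
elim: p t => [|x p IH] t /=; first by move=> _ /beta_nil; lia.
move=> sxp /beta_cons [-> //|/(IH _ (path_sorted sxp))].
by case: p sxp {IH} => [|y q] /=; [lia | case/andP; lia].
Qed.

Lemma has_charge_beta t p : sorted geq p -> has_charge (beta t p) t.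
Proof.
elim: p t => [|x p IH] t sp.
  by exists t, 0%N; split; [split=> b; rewrite beta_nil; lia | rewrite /charge_in addr0].
have := @has_charge_ins (beta (t - 1) p) (beta t (x :: p)) (t - 1) (x%:Z - 1 + t).
rewrite subrK; apply; first exact/IH/(path_sorted sp).
  by move/(beta_le_head (path_sorted sp)); case: p sp {IH} => [|y q] /=; [lia | case/andP; lia].
by move=> b; rewrite beta_cons; tauto.
Qed.

Lemma beta_add_max t p top : is_partition p -> (forall b, beta (t - 1) p b -> b < top) ->
  t <= top + 1 -> exists q, is_partition q /\ forall b, beta t q b <-> beta (t - 1) p b \/ b = top.
Proof.
move=> pp ptop ttop.
have head_lt y q : p = y :: q -> y%:Z - 1 + (t - 1) < top.
  by move=> pE; apply: ptop; exists 0%N; rewrite pE /=; lia.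
pose x := `|(top + 1 - t)%R|%N.
have [x0|xpos] := posnP x.
  have -> : p = [::].
    case: p pp head_lt {ptop} => // y q /andP [_ /andP [y0 _]] /(_ y q erefl); lia.
  exists [::]; split=> // b; rewrite !beta_nil; move: x0; rewrite /x; lia.
exists (x :: p); split.
  rewrite /is_partition /= xpos; case/andP: pp => sp ->; rewrite andbT.
  by case: p sp head_lt {ptop} => //= y q -> /(_ y q erefl) ylt; rewrite andbT /x; lia.
have xt : x%:Z - 1 + t = top by rewrite /x; lia.
by move=> b; rewrite beta_cons xt; tauto.
Qed.

Lemma framed_beta P L n : framed P L n ->
  exists p, is_partition p /\ forall b, beta (charge_in P L n) p b <-> P b.
Proof.
elim: n P => [|n IH] P [below above].
  exists [::]; split=> // b; rewrite beta_nil /charge_in addr0.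
  by split=> [/below //|Pb]; rewrite ltNge; apply/negP => Lb; apply: (above b) => //; lia.
rewrite /charge_in -addn1 window_cat count_cat /= addr0.
set top := L + n%:Z.
have Pbelow b : P b -> b <> top -> b < top.
  move=> Pb bt; rewrite ltNge; apply/negP => tb.
  by apply: (above b) => //; rewrite /top in bt tb *; lia.
have [Ptop|Ntop] := boolP (memb P top); last first.
  rewrite /= !addn0; apply: IH; split=> // b nb Pb.
  have [bt|/eqP bt] := eqVneq b top; first by move: Ntop; rewrite -bt => /membP.
  by have := Pbelow b Pb bt; rewrite /top in nb *; lia.
pose Q b := P b /\ b <> top.
have [|p [pp pQ]] := IH Q.
  split=> [b bL|b nb [Pb bt]]; last by have := Pbelow b Pb bt; rewrite /top in nb *; lia.
  by split; [apply: below | rewrite /top; lia].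
have cQP : count (memb Q) (window L n) = count (memb P) (window L n).
  apply: eq_in_count => b; rewrite mem_window => /andP [_ bt].
  by apply/membP/membP => [[]//|Pb]; split=> //; rewrite /top in bt *; lia.
rewrite /charge_in cQP in pQ.
pose t := L + (count (memb P) (window L n))%:Z + 1.
have [||q [qp qP]] := @beta_add_max t p top pp.
- by move=> b; rewrite addrK => /pQ [Pb /(Pbelow b Pb)].
- by have := count_size (memb P) (window L n); rewrite size_window /t /top; lia.
exists q; split=> // b.
have -> : L + (count (memb P) (window L n) + (true + 0))%N = t by rewrite /t; lia.
rewrite qP addrK pQ /Q; split=> [[[]//|->]|Pb]; first exact/membP.
by case: (eqVneq b top) => [|/eqP]; [right | left].
Qed.

Lemma beta_of_charge P t : has_charge P t ->
  exists p, is_partition p /\ forall b, beta t p b <-> P b.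
Proof. by move=> [L [n [F ->]]]; apply: framed_beta. Qed.

Lemma conf_of_betaP P t : has_charge P t ->
  is_partition (conf_of_beta P).1 /\
  forall b, beta (conf_of_beta P).2 (conf_of_beta P).1 b <-> P b.
Proof.
move=> Pt; apply: (epsilon_spec _ (fun q : seq nat * int => is_partition q.1 /\ _)).
by have [p Hp] := beta_of_charge Pt; exists (p, t).
Qed.

Lemma has_charge_comp P (g : int -> int) (N : nat) K t : (0 < N)%N ->
  (forall c, `|g c - c * N%:Z| <= K) -> has_charge P t ->
  exists u, has_charge (fun c => P (g c)) u.
Proof.
move=> N0 gK [L [n [[below above] _]]].
pose L' := - (`|L|%N%:Z + `|K|%N%:Z); pose U' := `|(L + n%:Z)%R|%N%:Z + `|K|%N%:Z.
exists (charge_in (fun c => P (g c)) L' `|(U' - L')%R|%N), L', `|(U' - L')%R|%N; split=> //.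
split=> c cL; [apply: below | apply: above]; have := gK c; rewrite /L' /U' in cL *.
  have : c * N%:Z <= c by nia.
  lia.
have : c <= c * N%:Z by nia.
lia.
Qed.

Definition exchange (T : Type) (B B' : T -> Prop) (a d b c : T) : Prop :=
  [/\ B a /\ B d, ~ B b /\ ~ B c, a <> d, b <> c &
      forall z, B' z <-> (B z /\ z <> a /\ z <> d) \/ z = b \/ z = c].

Lemma exchange_swap_removed T (B B' : T -> Prop) a d b c :
  exchange B B' a d b c -> exchange B B' d a b c.
Proof.
by case=> [[Ba Bd] [Bb Bc] ad bc BB']; split=> // [|z]; [move=> /esym | rewrite BB'; tauto].
Qed.

Lemma exchange_swap_added T (B B' : T -> Prop) a d b c :
  exchange B B' a d b c -> exchange B B' a d c b.
Proof.
by case=> [[Ba Bd] [Bb Bc] ad bc BB']; split=> // [|z]; [move=> /esym | rewrite BB'; tauto].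
Qed.

Lemma exchange_bij U T (F : U -> T) (X Y : U -> Prop) (B B' : T -> Prop) a d b c :
  injective F -> (forall z, exists u, z = F u) ->
  (forall u, X u <-> B (F u)) -> (forall u, Y u <-> B' (F u)) ->
  exchange X Y a d b c <-> exchange B B' (F a) (F d) (F b) (F c).
Proof.
move=> Finj Fsurj XB YB'; have Fneq u v : F u = F v <-> u = v by split=> [/Finj|->].
split=> -[[Xa Xd] [Xb Xc] ad bc XY]; split.
- by rewrite -!XB.
- by rewrite -!XB.
- by move/Fneq.
- by move/Fneq.
- by move=> z; have [u ->] := Fsurj z; rewrite -YB' XY XB !Fneq.
- by rewrite !XB.
- by rewrite !XB.
- by move=> E; apply: ad; rewrite E.
- by move=> E; apply: bc; rewrite E.
- by move=> u; rewrite YB' XY XB !Fneq.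
Qed.

Lemma sequential_exchangeE T (B : T -> Prop) a d b c z : B d -> ~ B b ->
  ((((B z /\ z <> a) \/ z = b) /\ z <> d) \/ z = c) <-> (B z /\ z <> a /\ z <> d) \/ z = b \/ z = c.
Proof.
move=> Bd Bb; have bd : b <> d by move=> E; apply: Bb; rewrite E.
by split; [tauto | move=> [|[->|->]]; tauto].
Qed.

Definition slice (M : nat) (B : 'I_M * int -> Prop) (k : 'I_M) (c : int) : Prop := B (k, c).

Lemma has_charge_slice_add M (B B' : 'I_M * int -> Prop) z0 t :
  ~ B z0 -> (forall z, B' z <-> B z \/ z = z0) ->
  has_charge (slice B z0.1) t -> has_charge (slice B' z0.1) (t + 1).
Proof.
case: z0 => k c0 /= Bz0 BB' Bt; apply: (has_charge_ins Bt Bz0) => c.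
by rewrite /slice BB' pair_equal_spec; tauto.
Qed.

Lemma has_charge_slice_remove M (B B' : 'I_M * int -> Prop) z0 t :
  B z0 -> (forall z, B' z <-> B z /\ z <> z0) ->
  has_charge (slice B z0.1) t -> has_charge (slice B' z0.1) (t - 1).
Proof.
case: z0 => k c0 /= Bz0 BB' Bt; apply: (has_charge_del Bt Bz0) => c.
by rewrite /slice BB' pair_equal_spec; tauto.
Qed.

Lemma has_charge_slice_swap M (B B' : 'I_M * int -> Prop) a b k t :
  B a -> ~ B b -> a.1 = b.1 -> (forall z, B' z <-> (B z /\ z <> a) \/ z = b) ->
  has_charge (slice B k) t -> has_charge (slice B' k) t.
Proof.
move=> Ba Bb ab BB'; have [->|/eqP ka] := eqVneq k a.1; last first.
  apply: has_charge_ext => c; rewrite /slice BB'.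
  have [ak bk] : (k, c) <> a /\ (k, c) <> b by split=> E; apply: ka; [rewrite -E | rewrite ab -E].
  tauto.
pose B1 z := B z /\ z <> a.
move/(has_charge_slice_remove (B' := B1) Ba (fun z => iff_refl _)).
by rewrite ab -{2}(subrK 1 t); apply: has_charge_slice_add => // -[].
Qed.

Lemma has_charge_slice_exchange M (B B' : 'I_M * int -> Prop) a d b c k t :
  exchange B B' a d b c -> a.1 = b.1 -> d.1 = c.1 ->
  has_charge (slice B k) t -> has_charge (slice B' k) t.
Proof.
case=> [[Ba Bd] [Bb Bc] ad bc BB'] ab dc Bt.
pose B1 z := (B z /\ z <> a) \/ z = b.
have B1t : has_charge (slice B1 k) t by apply: (has_charge_slice_swap (B' := B1) Ba Bb).
apply: (has_charge_slice_swap (B := B1) (a := d) (b := c)) B1t => //.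
- by left; split=> // da; apply: ad.
- by rewrite /B1 => -[[/Bc]|/esym/bc].
- by move=> z; rewrite BB' -(sequential_exchangeE a c z Bd Bb).
Qed.

Definition mbeta_set (M : nat) (x : mconf M) (z : 'I_M * int) : Prop := mbeta x z.1 z.2.

Lemma move2_updateE M (x : mconf M) (k1 k2 k : 'I_M) (b1 b2 h c : int) :
  (let step1 := fun b' =>
      if k == k1 then (b' <> b1 /\ mbeta x k b') \/ b' = b1 + h else mbeta x k b' in
   if k == k2 then (c <> b2 + h /\ step1 c) \/ c = b2 else step1 c) <->
  (((mbeta_set x (k, c) /\ (k, c) <> (k1, b1)) \/ (k, c) = (k1, b1 + h)) /\ (k, c) <> (k2, b2 + h))
    \/ (k, c) = (k2, b2).
Proof.
rewrite /mbeta_set /= !pair_equal_spec.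
by case: eqVneq => [<-|/eqP k1k]; case: eqVneq => [<-|/eqP k2k]; tauto.
Qed.

Lemma sequential_exchange_nondegenerate M (B B' : 'I_M * int -> Prop) (ch : 'I_M -> int)
    a d b c :
  B a -> B d -> ~ B b -> ~ B c -> a.1 = b.1 -> d.1 = c.1 -> ~ (a = d /\ b = c) ->
  (forall z, B' z <-> (((B z /\ z <> a) \/ z = b) /\ z <> d) \/ z = c) ->
  (forall k, has_charge (slice B k) (ch k)) -> (forall k, has_charge (slice B' k) (ch k)) ->
  a <> d /\ b <> c.
Proof.
move=> Ba Bd Bb Bc ab dc nd BB' Bch B'ch.
pose B1 z := (B z /\ z <> a) \/ z = b.
have B1ch k : has_charge (slice B1 k) (ch k).
  by apply: (has_charge_slice_swap (B' := B1) Ba Bb ab).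
have ba : b <> a by move=> E; apply: Bb; rewrite E.
have B1a z : B1 z -> z <> a by move=> [[_ //]|->].
split=> [ad|bc].
- have bc : b <> c by move=> bc; apply: nd.
  have B'c z : B' z <-> B1 z \/ z = c by rewrite BB' -ad; have := B1a z; rewrite /B1; tauto.
  have Bc1 : ~ B1 c by rewrite /B1 => -[[/Bc]|/esym/bc].
  have := has_charge_uniq (B'ch c.1) (has_charge_slice_add Bc1 B'c (B1ch c.1)); lia.
- have B1d : B1 d by left; split=> // da; apply: nd.
  have B'd z : B' z <-> B1 z /\ z <> d.
    rewrite BB' -bc /B1; split=> [[|->]|]; first tauto; last tauto.
    by split; [right | move=> E; apply: Bb; rewrite E].
  have := has_charge_uniq (B'ch d.1) (has_charge_slice_remove B1d B'd (B1ch d.1)); lia.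
Qed.

Lemma move2_exchange N M (x y : mconf M) :
  (forall k, is_partition (x.1 k)) -> (forall k, is_partition (y.1 k)) ->
  @move2 N M x y <->
  exists (k1 k2 : 'I_M) (b1 b2 h : int), (b1 = b2 %[mod N%:Z])%Z /\ 0 < h /\
    exchange (mbeta_set x) (mbeta_set y) (k1, b1) (k2, b2 + h) (k1, b1 + h) (k2, b2).
Proof.
move=> xp yp.
have xch k : has_charge (slice (mbeta_set x) k) (x.2 k).
  by case/andP: (xp k) => sp _; exact (has_charge_beta (x.2 k) sp).
have ych k : has_charge (slice (mbeta_set y) k) (y.2 k).
  by case/andP: (yp k) => sp _; exact (has_charge_beta (y.2 k) sp).
split=> [[ch [k1 [k2 [b1 [b2 [h [bmod [h0 [X1 [X2 [X3 [X4 Y]]]]]]]]]]]]|].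
- have Yseq z : mbeta_set y z <-> (((mbeta_set x z /\ z <> (k1, b1)) \/ z = (k1, b1 + h))
      /\ z <> (k2, b2 + h)) \/ z = (k2, b2).
    by case: z => k c; apply: iff_trans (Y k c) (move2_updateE _ _ _ _ _ _ _ _).
  have [||ad bc] := @sequential_exchange_nondegenerate _ (mbeta_set x) (mbeta_set y) (fun k => x.2 k)
    (k1, b1) (k2, b2 + h) (k1, b1 + h) (k2, b2) X1 X4 X2 X3 erefl erefl _ Yseq xch.
  + by rewrite !pair_equal_spec => -[[_ E1] [_ E2]]; lia.
  + by move=> k; rewrite ch.
  exists k1, k2, b1, b2, h; do 2!split=> //.
  by split=> // z; rewrite Yseq sequential_exchangeE.
- move=> [k1 [k2 [b1 [b2 [h [bmod [h0 ex]]]]]]]; split.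
    by move=> k; apply: has_charge_uniq (has_charge_slice_exchange ex erefl erefl (xch k)) (ych k).
  case: (ex) => [[X1 X4] [X2 X3] _ _ Y].
  exists k1, k2, b1, b2, h; do 6!split=> //.
  by move=> k c; rewrite move2_updateE (sequential_exchangeE _ _ _ X4 X2); exact: (Y (k, c)).
Qed.

Definition coded_by (M : nat) (F : 'I_M -> int -> int) (B : int -> Prop) (x : mconf M) :=
  forall k, is_partition (x.1 k) /\ forall c, mbeta x k c <-> B (F k c).

Definition coded_move (N M : nat) (F : 'I_M -> int -> int) (B B' : int -> Prop) :=
  exists (k1 k2 : 'I_M) (b1 b2 h : int), (b1 = b2 %[mod N%:Z])%Z /\ 0 < h /\
    exchange B B' (F k1 b1) (F k2 (b2 + h)) (F k1 (b1 + h)) (F k2 b2).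

Lemma move2_coded N M (F : 'I_M -> int -> int) B B' x y :
  (forall k k' c c', F k c = F k' c' -> k = k' /\ c = c') -> (forall b, exists k c, b = F k c) ->
  coded_by F B x -> coded_by F B' y -> @move2 N M x y <-> coded_move N F B B'.
Proof.
move=> Finj Fsurj xB yB'.
have Finj' : injective (fun z : 'I_M * int => F z.1 z.2).
  by move=> [k c] [k' c'] /= /Finj [-> ->].
have Fsurj' z : exists u : 'I_M * int, z = F u.1 u.2.
  by have [k [c ->]] := Fsurj z; exists (k, c).
have xB' u : mbeta_set x u <-> B (F u.1 u.2) by apply: (xB u.1).2.
have yB'' u : mbeta_set y u <-> B' (F u.1 u.2) by apply: (yB' u.1).2.
rewrite move2_exchange => [|k|k]; [|by case: (xB k)|by case: (yB' k)].
by split=> -[k1 [k2 [b1 [b2 [h [bm [h0 E]]]]]]]; exists k1, k2, b1, b2, h; do 2!split=> //;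
  move: E; rewrite (exchange_bij _ _ _ _ Finj' Fsurj' xB' yB'').
Qed.

Definition abacus_pos (n : nat) (i : 'I_n) (a : int) : int := a * n%:Z + (i : nat)%:Z.

Lemma abacus_posD n (i : 'I_n) a d : abacus_pos i (a + d) = abacus_pos i a + d * n%:Z.
Proof. by rewrite /abacus_pos mulrDl addrAC. Qed.

Lemma abacus_pos_inj n (i i' : 'I_n) a a' :
  abacus_pos i a = abacus_pos i' a' -> i = i' /\ a = a'.
Proof.
rewrite /abacus_pos => E; have := ltn_ord i; have := ltn_ord i' => i'n in_.
have aa' : a = a' by nia.
by split=> //; apply: val_inj; move: E; rewrite aa' /=; lia.
Qed.

Lemma abacus_pos_surj n b : (0 < n)%N -> exists (i : 'I_n) a, b = abacus_pos i a.
Proof.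
move=> n0; have n0z : 0 < n%:Z by lia.
have bn : (`|(b %% n%:Z)%Z|%N < n)%N.
  by have := ltz_pmod b n0z; have := modz_ge0 b (lt0r_neq0 n0z); lia.
exists (Ordinal bn), (b %/ n%:Z)%Z; rewrite /abacus_pos /= gez0_abs ?modz_ge0 ?lt0r_neq0 //.
exact: divz_eq.
Qed.

Lemma modz_abacus_pos n (i : 'I_n) a : (abacus_pos i a %% n%:Z)%Z = (i : nat)%:Z.
Proof. by rewrite /abacus_pos modzMDl modz_small //; have := ltn_ord i; lia. Qed.

Lemma psi_rev_pos e r (i : 'I_e) (j : 'I_r) a :
  psi e (rev_ord j) (abacus_pos i a) = abacus_pos i (abacus_pos j a).
Proof.
have := ltn_ord i; have := ltn_ord j => jr ie.
have ie' : 0 <= (i : nat)%:Z < `|e%:Z|%N by lia.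
rewrite /psi /abacus_pos divzMDl ?divz_small ?modzMDl ?modz_small //; last by lia.
rewrite /= subnSK //; nia.
Qed.

Lemma psi_inj e r (k k' : 'I_r) c c' :
  (0 < e)%N -> psi e k c = psi e k' c' -> k = k' /\ c = c'.
Proof.
move=> e0; have [i [a ->]] := abacus_pos_surj c e0; have [i' [a' ->]] := abacus_pos_surj c' e0.
rewrite -(rev_ordK k) -(rev_ordK k') !psi_rev_pos.
by move=> /abacus_pos_inj [-> /abacus_pos_inj [/rev_ord_inj -> ->]].
Qed.

Lemma psi_surj e r b : (0 < e)%N -> (0 < r)%N -> exists (k : 'I_r) c, b = psi e k c.
Proof.
move=> e0 r0; have [i [q ->]] := abacus_pos_surj b e0; have [j [a ->]] := abacus_pos_surj q r0.
by exists (rev_ord j), (abacus_pos i a); rewrite psi_rev_pos.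
Qed.

Lemma psi_near_linear e r (k : 'I_r) c : (0 < e)%N ->
  `|psi e k c - c * r%:Z| <= (e * r).*2%:Z.
Proof.
move=> e0; have [i [a ->]] := abacus_pos_surj c e0; rewrite -(rev_ordK k) psi_rev_pos.
have := ltn_ord i; have := ltn_ord (rev_ord k); rewrite /abacus_pos; nia.
Qed.

Lemma eta_coded e l s : (0 < e)%N -> is_partition l ->
  coded_by (@abacus_pos e) (beta s l) (eta e l s).
Proof.
move=> e0 /andP [sl _] k.
have [|t lt] := @has_charge_comp _ (abacus_pos k) e e%:Z s e0 _ (has_charge_beta s sl).
  by move=> c; rewrite /abacus_pos addrAC subrr add0r; have := ltn_ord k; lia.
exact: conf_of_betaP lt.
Qed.

Lemma Phi_coded e r l s : (0 < e)%N -> (0 < r)%N -> is_partition l ->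
  coded_by (@psi e r) (beta s l) (Phi e r l s).
Proof.
move=> e0 r0 /andP [sl _].
have comp (k : 'I_r) : exists t, has_charge (fun c => beta s l (psi e k c)) t.
  exact: has_charge_comp r0 (fun c => psi_near_linear k c e0) (has_charge_beta s sl).
pose X : mconf r := (fun k => (conf_of_beta (fun c => beta s l (psi e k c))).1,
                     fun k => (conf_of_beta (fun c => beta s l (psi e k c))).2).
have XB : coded_by (@psi e r) (beta s l) X by move=> k; have [t /conf_of_betaP] := comp k.
have [Phip PhiB] : (forall k, is_partition ((Phi e r l s).1 k)) /\
    forall b, beta s l b <-> exists k c, mbeta (Phi e r l s) k c /\ b = psi e k c.
  apply: (epsilon_spec _ (fun x : mconf r => (forall k, is_partition (x.1 k)) /\ _)).
  exists X; split=> [k|b]; first by case: (XB k).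
  split=> [|[k [c [Xc ->]]]]; last exact/(XB k).2.
  move=> lb; have [k [c bE]] := psi_surj b e0 r0.
  by exists k, c; split=> //; apply/(XB k).2; rewrite -bE.
move=> k; split=> // c; split=> [Phic|/PhiB [k' [c' [Phic' /esym /psi_inj]]]].
  by apply/PhiB; exists k, c.
by case=> // <- <-.
Qed.

Lemma coded_move_rev N M (F : 'I_M -> int -> int) B B' :
  coded_move N (fun k => F (rev_ord k)) B B' <-> coded_move N F B B'.
Proof.
split=> -[k1 [k2 mv]]; exists (rev_ord k1), (rev_ord k2); rewrite ?rev_ordK; exact: mv.
Qed.

(* The four positions of the move form a rectangle in the grid [(i, j, a)]; read on
   [G] they form a move again after swapping the removed or the added pair, according
   to the sign of the new step [d]. *)
Lemma coded_move_transpose m n (F : 'I_m -> int -> int) (G : 'I_n -> int -> int) B B' :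
  (0 < n)%N -> (forall i j a, F i (abacus_pos j a) = G j (abacus_pos i a)) ->
  coded_move n F B B' -> coded_move m G B B'.
Proof.
move=> n0 FG [i1 [i2 [c1 [c2 [h [cmod [h0 ex]]]]]]].
have [j1 [a1 c1E]] := abacus_pos_surj c1 n0.
have [j2 [a1' c1hE]] := abacus_pos_surj (c1 + h) n0.
have [j [a2 c2E]] := abacus_pos_surj c2 n0.
have jj1 : j = j1.
  by apply: val_inj; move: cmod; rewrite c1E c2E !modz_abacus_pos => -[].
subst j; pose a2' := a1' + (a2 - a1).
have c2hE : c2 + h = abacus_pos j2 a2'.
  by rewrite /a2' abacus_posD -c1hE c2E c1E /abacus_pos; lia.
rewrite c1hE c2hE c1E c2E !FG in ex.
pose d := abacus_pos i2 a2 - abacus_pos i1 a1.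
have dE1 : abacus_pos i1 a1 + d = abacus_pos i2 a2 by rewrite /d addrC subrK.
have dE2 : abacus_pos i1 a1' + d = abacus_pos i2 a2' by rewrite /d /a2' /abacus_pos; lia.
case: (ltrgtP 0 d) => d0.
- exists j1, j2, (abacus_pos i1 a1), (abacus_pos i1 a1'), d; rewrite !modz_abacus_pos.
  split=> //; split=> //; rewrite dE1 dE2; exact: exchange_swap_added ex.
- exists j2, j1, (abacus_pos i2 a2'), (abacus_pos i2 a2), (- d); rewrite !modz_abacus_pos.
  split=> //; split; first by rewrite oppr_gt0.
  have dE3 : abacus_pos i2 a2 - d = abacus_pos i1 a1 by rewrite -dE1 addrK.
  have dE4 : abacus_pos i2 a2' - d = abacus_pos i1 a1' by rewrite -dE2 addrK.
  by rewrite dE3 dE4; exact: exchange_swap_removed ex.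
- by case: ex => -[Ba _] [_ Bc] _ _ _; move: Bc; rewrite -dE1 -d0 addr0.
Qed.

Theorem lemma2p12 (e r : nat) (l m : seq nat) (s : int) :
  (2 <= e)%N -> (2 <= r)%N ->
  is_partition l -> is_partition m -> sim_e e l m ->
  (@move2 r e (eta e l s) (eta e m s) <-> @move2 e r (Phi e r l s) (Phi e r m s)).
Proof.
move=> e2 r2 lp mp _.
have e0 : (0 < e)%N by lia.
have r0 : (0 < r)%N by lia.
rewrite (move2_coded _ (@abacus_pos_inj e) (fun b => abacus_pos_surj b e0)
  (eta_coded s e0 lp) (eta_coded s e0 mp)).
rewrite (move2_coded _ (fun k k' c c' => @psi_inj e r k k' c c' e0)
  (fun b => psi_surj b e0 r0) (Phi_coded s e0 r0 lp) (Phi_coded s e0 r0 mp)).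
rewrite -(coded_move_rev _ (@psi e r)).
by split; apply: coded_move_transpose => // i j a /=; rewrite psi_rev_pos.
Qed.
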